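(* Let $q=2^m$ and let $f:\mathbb{F}_q\to\mathbb{F}_q$ be a function. The following two properties are equivalent: (i) there exist $\alpha,\beta\in\mathbb{F}_q$ and six distinct elements $x_0,x_1,x_2,x_3,x_4,x_5\in\mathbb{F}_q$ such that $$x_0+x_1=\alpha,\ f(x_0)+f(x_1)=\beta;\quad x_2+x_3=\alpha,\ f(x_2)+f(x_3)=\beta;\quad x_4+x_5=\alpha,\ f(x_4)+f(x_5)=\beta;$$ (ii) there exist four distinct elements $x_0,x_1,x_2,x_4\in\mathbb{F}_q$ with $x_0+x_1+x_2+x_4\neq 0$ such that $$f(x_0)+f(x_1)+f(x_2)+f(x_0+x_1+x_2)=0\quad\text{and}\quad f(x_0)+f(x_1)+f(x_4)+f(x_0+x_1+x_4)=0.$$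
   Context: $\mathbb{F}_q$ denotes the finite field with $q=2^m$ elements (characteristic 2). *)

From mathcomp Require Import all_boot all_order all_algebra all_field.
Set Implicit Arguments. Unset Strict Implicit. Unset Printing Implicit Defensive.

(** A pair {x, y} with x + y = s is a translation orbit {x, x + s} of the
    involution x |-> x + s, and on such an orbit f x + f y is the directional
    derivative f x + f (x + s).  So (i) asks for three distinct orbits of one
    translation on which the derivative takes the same value.  Given x0, x1 of
    the first orbit and one point x2, x4 of each of the other two, the
    remaining points are x0 + x1 + x2 and x0 + x1 + x4; equality of the
    derivatives becomes the two four-term sums of (ii), and the distinctness
    of the six points becomes that of x0, x1, x2, x4 together with
    x4 <> x0 + x1 + x2, i.e. x0 + x1 + x2 + x4 <> 0. *)

From mathcomp Require Import all_boot all_order all_algebra all_field.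
Set Implicit Arguments.
Unset Strict Implicit.
Unset Printing Implicit Defensive.
Import GRing.Theory.
Local Open Scope ring_scope.

Section Char2.

Variable M : zmodType.
Hypothesis addMM : forall x : M, x + x = 0.

Lemma oppr_char2 (x : M) : - x = x.
Proof. by apply/esym/eqP; rewrite -addr_eq0 addMM. Qed.

Lemma addKr_char2 (x y : M) : x + (x + y) = y.
Proof. by rewrite addrA addMM add0r. Qed.

Lemma addr_eq0_char2 (x y : M) : (x + y == 0) = (x == y).
Proof. by rewrite addr_eq0 oppr_char2. Qed.

Lemma addr_eq_char2 (x y z : M) : (x + y == z) = (x == z + y).
Proof. by rewrite -subr_eq oppr_char2. Qed.

Lemma addr4_eq0_char2 (x y z t : M) : (x + y + z + t == 0) = (x + y == z + t).
Proof. by rewrite -addrA addr_eq0_char2. Qed.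

Lemma addrr_eq_char2 (x y : M) : (x == x + y) = (y == 0).
Proof. by rewrite eq_sym addr_eq_char2 -addr_eq0_char2 addKr_char2. Qed.

End Char2.

Section TranslationOrbits.

Variables V W : zmodType.
Hypotheses (addVV : forall x : V, x + x = 0) (addWW : forall y : W, y + y = 0).
Variable f : V -> W.

Definition dir_deriv (s x : V) : W := f x + f (x + s).

Lemma uniq_translation_orbits (s a b c : V) :
  uniq [:: a; a + s; b; b + s; c; c + s] =
  uniq [:: a; a + s; b; c] && (b + s != c).
Proof.
rewrite /= !inE !negb_or !(inj_eq (addIr s)) !addrr_eq_char2 //.
(* Both sides are now conjunctions of the same seven disequalities. *)
by rewrite ![_ + s == _]addr_eq_char2 //; do !case: (_ == _).
Qed.

Lemma three_orbitsP :
  (exists (alpha : V) (beta : W) (x0 x1 x2 x3 x4 x5 : V),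
      uniq [:: x0; x1; x2; x3; x4; x5] /\
      x0 + x1 = alpha /\ f x0 + f x1 = beta /\
      x2 + x3 = alpha /\ f x2 + f x3 = beta /\
      x4 + x5 = alpha /\ f x4 + f x5 = beta)
  <->
  (exists s a b c : V,
      [/\ uniq [:: a; a + s; b; c], b + s != c,
           dir_deriv s a = dir_deriv s b & dir_deriv s a = dir_deriv s c]).
Proof.
split.
- move=> [s [d [a [x1 [b [x3 [c [x5 [U [e1 [fa [e3 [fb [e5 fc]]]]]]]]]]]]]].
  have dx1 : x1 = a + s by rewrite -e1 addKr_char2.
  have dx3 : x3 = b + s by rewrite -e3 addKr_char2.
  have dx5 : x5 = c + s by rewrite -e5 addKr_char2.
  subst x1 x3 x5; move: U; rewrite uniq_translation_orbits // => /andP[U bc].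
  by exists s, a, b, c; rewrite /dir_deriv fa fb fc.
- move=> [s [a [b [c [U bc Dab Dac]]]]].
  exists s, (dir_deriv s a), a, (a + s), b, (b + s), c, (c + s).
  by rewrite uniq_translation_orbits // U bc !addKr_char2.
Qed.

Lemma two_quadruplesP :
  (exists (x0 x1 x2 x4 : V),
      uniq [:: x0; x1; x2; x4] /\
      x0 + x1 + x2 + x4 != 0 /\
      f x0 + f x1 + f x2 + f (x0 + x1 + x2) = 0 /\
      f x0 + f x1 + f x4 + f (x0 + x1 + x4) = 0)
  <->
  (exists s a b c : V,
      [/\ uniq [:: a; a + s; b; c], b + s != c,
           dir_deriv s a = dir_deriv s b & dir_deriv s a = dir_deriv s c]).
Proof.
split.
- move=> [a [x1 [b [c [U [abc [fab fac]]]]]]].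
  exists (a + x1), a, b, c; rewrite /dir_deriv addKr_char2 //.
  move: abc fab fac; rewrite !(addrC _ (a + x1)) addr_eq0_char2 //.
  move=> -> /eqP fab /eqP fac.
  by split=> //; apply/eqP; rewrite -addr4_eq0_char2.
- move=> [s [a [b [c [U bc Dab Dac]]]]].
  exists a, (a + s), b, c; rewrite !addKr_char2 // addr_eq0_char2 // !(addrC s).
  by do !split=> //; apply/eqP; rewrite addr4_eq0_char2 //; apply/eqP.
Qed.

End TranslationOrbits.

Theorem lemma2p1 (F : finFieldType) (m : nat)
  (hchar : (2 \in [pchar F])%N) (hcard : #|F| = (2 ^ m)%N) (f : F -> F) :
  (exists (alpha beta x0 x1 x2 x3 x4 x5 : F),
      uniq [:: x0; x1; x2; x3; x4; x5] /\
      x0 + x1 = alpha /\ f x0 + f x1 = beta /\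
      x2 + x3 = alpha /\ f x2 + f x3 = beta /\
      x4 + x5 = alpha /\ f x4 + f x5 = beta)
  <->
  (exists (x0 x1 x2 x4 : F),
      uniq [:: x0; x1; x2; x4] /\
      x0 + x1 + x2 + x4 != 0 /\
      f x0 + f x1 + f x2 + f (x0 + x1 + x2) = 0 /\
      f x0 + f x1 + f x4 + f (x0 + x1 + x4) = 0).
Proof.
have addFF := addrr_pchar2 hchar.
exact: iff_trans (three_orbitsP addFF f) (iff_sym (two_quadruplesP addFF addFF f)).
Qed.
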